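(* Let $u:\mathbb{R}^2\to\mathbb{R}^2$ be a continuous divergence-free vector field such that $|u|\neq0$ on a domain $\mathcal{D}\subset\mathbb{R}^2$. Then for any $a\in\mathcal D$, the solution $X(a,t)$ of $\frac{d}{dt}X(a,t)=u(X(a,t))$, $X(a,0)=a$, is unique (forward and backward in time) as long as it stays in $\mathcal{D}$. *)

From Stdlib Require Import Reals.
Open Scope R_scope.

Definition pt := (R * R)%type.

Definition norm2 (p : pt) : R := sqrt (fst p ^ 2 + snd p ^ 2).
Definition dist2 (p q : pt) : R := norm2 (fst p - fst q, snd p - snd q).

Definition cont2 (u : pt -> pt) : Prop :=
  forall p eps, 0 < eps -> exists delta, 0 < delta /\
    forall q, dist2 q p < delta -> dist2 (u q) (u p) < eps.

Definition cont2s (f : R -> R -> R) : Prop :=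
  forall x y eps, 0 < eps -> exists delta, 0 < delta /\
    forall x' y', dist2 (x', y') (x, y) < delta -> Rabs (f x' y' - f x y) < eps.

(* [f] is Riemann integrable on [a,b] with integral [v]
   (RiemannInt does not depend on the integrability proof). *)
Definition RInt_is (f : R -> R) (a b v : R) : Prop :=
  exists pr : Riemann_integrable f a b, RiemannInt pr = v.

Definition DInt_square_is (g : R -> R -> R) (L v : R) : Prop :=
  exists F : R -> R,
    (forall y, RInt_is (fun x => g x y) (-L) L (F y)) /\ RInt_is F (-L) L v.

Definition C1c_test (phi phix phiy : R -> R -> R) (L : R) : Prop :=
  0 < L /\
  (forall x y, derivable_pt_lim (fun s => phi s y) x (phix x y)) /\
  (forall x y, derivable_pt_lim (fun s => phi x s) y (phiy x y)) /\
  cont2s phix /\ cont2s phiy /\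
  (forall x y, L <= Rabs x \/ L <= Rabs y -> phi x y = 0).

(* Divergence-free in the sense of distributions:
   integral of u . grad phi = 0 for every compactly supported C^1 test fn. *)
Definition div_free (u : pt -> pt) : Prop :=
  forall phi phix phiy L, C1c_test phi phix phiy L ->
    DInt_square_is
      (fun x y => fst (u (x, y)) * phix x y + snd (u (x, y)) * phiy x y) L 0.

Definition open2 (D : pt -> Prop) : Prop :=
  forall p, D p -> exists r, 0 < r /\ forall q, dist2 q p < r -> D q.

(* Domain = nonempty open connected set *)
Definition domain2 (D : pt -> Prop) : Prop :=
  (exists p, D p) /\ open2 D /\
  forall U V : pt -> Prop, open2 U -> open2 V ->
    (forall p, D p -> U p \/ V p) ->
    (forall p, D p -> U p -> V p -> False) ->
    (forall p, D p -> ~ U p) \/ (forall p, D p -> ~ V p).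

Definition open_int_set (I : R -> Prop) : Prop :=
  (forall s t r, I s -> I t -> s <= r <= t -> I r) /\
  (forall t, I t -> exists r, 0 < r /\ forall s, Rabs (s - t) < r -> I s).

Definition is_solution (u : pt -> pt) (a : pt) (I : R -> Prop) (X : R -> pt) : Prop :=
  X 0 = a /\
  forall t, I t ->
    derivable_pt_lim (fun s => fst (X s)) t (fst (u (X t))) /\
    derivable_pt_lim (fun s => snd (X s)) t (snd (u (X t))).

From Stdlib Require Import Reals Lra Classical ClassicalEpsilon.
From Coquelicot Require Import Coquelicot.
Open Scope R_scope.

(** 1. Testing the weak divergence condition against products [a(x) b(y)] of
     smoothed indicator functions of intervals, and letting the smoothing go
     to 0, yields the flux identity: the flux of [u] out of every rectangle
     vanishes.
  2. The flux identity makes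
       [stream u x y = int_0^y V1(x,s) ds - int_0^x V2(r,0) dr]
     a stream function: it is differentiable with gradient [(-V2, V1)],
     hence constant along every trajectory.
  3. Near a point where, say, [V1 <> 0], [stream u] is strictly monotone in
     [y], so two points of the trajectories with the same first coordinate
     coincide.  The first coordinates of [X] and [Y] are then strictly
     monotone with velocities that agree wherever their values agree, and a
     reparametrisation argument shows that they coincide near the meeting
     time.  The case [V2 <> 0] is symmetric.
  4. A continuation argument over the interval [J] turns this local
     statement into the global one. *)

(** ** Continuity of real functions and one-variable integration *)

(** Epsilon-delta continuity at a point, equivalent to Coquelicot's
    [continuous] but convenient for explicit estimates. *)
Definition cont_at (f : R -> R) (x : R) : Prop :=
  forall e, 0 < e -> exists d, 0 < d /\
    forall y, Rabs (y - x) < d -> Rabs (f y - f x) < e.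

Lemma cont_at_continuous f x : cont_at f x -> continuous f x.
Proof.
  intros H. apply continuity_pt_filterlim. intros e He.
  destruct (H e He) as [d [Hd Hfd]]. exists d; split; auto.
  intros y [_ Hy]. exact (Hfd y Hy).
Qed.

Lemma continuous_cont_at f x : continuous f x -> cont_at f x.
Proof.
  intros H. apply continuity_pt_filterlim in H. intros e He.
  destruct (H e He) as [d [Hd Hfd]]. exists d; split; auto.
  intros y Hy. destruct (Req_dec y x) as [->|Hyx].
  - unfold Rminus; rewrite Rplus_opp_r, Rabs_R0; auto.
  - apply Hfd. split; [split; [exact I|auto]|auto].
Qed.

Lemma cont_at_plus f g x : cont_at f x -> cont_at g x -> cont_at (fun z => f z + g z) x.
Proof.
  intros; apply continuous_cont_at, (continuous_plus f g); apply cont_at_continuous; auto.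
Qed.

Lemma cont_at_minus f g x : cont_at f x -> cont_at g x -> cont_at (fun z => f z - g z) x.
Proof.
  intros; apply continuous_cont_at, (continuous_minus f g); apply cont_at_continuous; auto.
Qed.

Lemma cont_at_mult f g x : cont_at f x -> cont_at g x -> cont_at (fun z => f z * g z) x.
Proof.
  intros; apply continuous_cont_at, (continuous_mult f g); apply cont_at_continuous; auto.
Qed.

Lemma cont_at_const c x : cont_at (fun _ => c) x.
Proof. apply continuous_cont_at, continuous_const. Qed.

Lemma cont_at_comp f g x : cont_at f x -> cont_at g (f x) -> cont_at (fun z => g (f z)) x.
Proof.
  intros; apply continuous_cont_at, (continuous_comp f g); apply cont_at_continuous; auto.
Qed.

Lemma cont_at_abs f x : cont_at f x -> cont_at (fun z => Rabs (f z)) x.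
Proof. intros H. apply cont_at_comp; auto. apply continuous_cont_at, continuous_Rabs. Qed.

Lemma cont_at_shift f c x : cont_at f (x - c) -> cont_at (fun z => f (z - c)) x.
Proof.
  intros H. apply (cont_at_comp (fun z => z - c) f); auto.
  apply continuous_cont_at, (continuous_minus (fun z => z) (fun _ => c));
    [apply continuous_id | apply continuous_const].
Qed.

Lemma cont_at_lipschitz f x K : 0 < K ->
  (forall y, Rabs (f y - f x) <= K * Rabs (y - x)) -> cont_at f x.
Proof.
  intros HK H e He. exists (e / K). split; [apply Rdiv_lt_0_compat; auto|].
  intros y Hy. eapply Rle_lt_trans; [apply H|].
  apply Rmult_lt_compat_l with (r := K) in Hy; auto.
  replace (K * (e / K)) with e in Hy by (field; lra). exact Hy.
Qed.

Lemma is_derive_cont_at f x l : is_derive f x l -> cont_at f x.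
Proof.
  intros H. apply continuous_cont_at.
  apply (ex_derive_continuous (K := R_AbsRing) (V := R_NormedModule) f). eexists; eauto.
Qed.

Lemma derivable_pt_lim_cont_at f t l : derivable_pt_lim f t l -> cont_at f t.
Proof. intros H. apply is_derive_Reals in H. eapply is_derive_cont_at; eauto. Qed.

(** Restates a goal [a = b] posed in a Coquelicot structure with carrier [R]
    as an equation in [R], so that [ring] and [lra] apply. *)
Ltac as_real_eq := match goal with |- ?a = ?b => change (@eq R a b) end.

Lemma ex_RInt_cont_on f a b :
  (forall z, Rmin a b <= z <= Rmax a b -> cont_at f z) -> ex_RInt f a b.
Proof.
  intros H. apply (ex_RInt_continuous (V := R_CompleteNormedModule)).
  intros z Hz. apply cont_at_continuous; auto.
Qed.

Lemma ex_RInt_cont f a b : (forall z, cont_at f z) -> ex_RInt f a b.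
Proof. intros H; apply ex_RInt_cont_on; auto. Qed.

(** The linearity and Chasles rules of [RInt], specialised to real-valued
    functions so that they are stated with [+], [-] and [*]. *)
Lemma RInt_add f g a b : ex_RInt f a b -> ex_RInt g a b ->
  RInt (fun x => f x + g x) a b = RInt f a b + RInt g a b.
Proof. intros; apply (RInt_plus f g a b); auto. Qed.

Lemma RInt_sub f g a b : ex_RInt f a b -> ex_RInt g a b ->
  RInt (fun x => f x - g x) a b = RInt f a b - RInt g a b.
Proof. intros; apply (RInt_minus f g a b); auto. Qed.

Lemma RInt_mult_l f a b c : ex_RInt f a b ->
  RInt (fun x => c * f x) a b = c * RInt f a b.
Proof. intros; apply (RInt_scal f a b c); auto. Qed.

Lemma RInt_mult_r f a b c : ex_RInt f a b ->
  RInt (fun x => f x * c) a b = RInt f a b * c.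
Proof.
  intros. rewrite Rmult_comm, <- RInt_mult_l; auto.
  apply RInt_ext; intros x _; apply Rmult_comm.
Qed.

Lemma RInt_const_R a b c : RInt (fun _ => c) a b = (b - a) * c.
Proof. exact (RInt_const (V := R_CompleteNormedModule) a b c). Qed.

Lemma RInt_chasles_R f a b c : ex_RInt f a b -> ex_RInt f b c ->
  RInt f a b + RInt f b c = RInt f a c.
Proof. intros; apply (RInt_Chasles f a b c); auto. Qed.

Lemma RInt_swap_R f a b : ex_RInt f a b -> RInt f b a = - RInt f a b.
Proof. intros H. symmetry. exact (opp_RInt_swap (V := R_CompleteNormedModule) f a b H). Qed.

Lemma RInt_zero_on f a b :
  (forall x, Rmin a b < x < Rmax a b -> f x = 0) -> RInt f a b = 0.
Proof. intros H. rewrite (RInt_ext f (fun _ => 0)) by auto. rewrite RInt_const_R. as_real_eq; ring. Qed.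

Lemma RInt_abs_bound f a b M : ex_RInt f a b ->
  (forall t, Rmin a b <= t <= Rmax a b -> Rabs (f t) <= M) ->
  Rabs (RInt f a b) <= Rabs (b - a) * M.
Proof.
  intros Hf H. destruct (Rle_dec a b) as [Hab|Hab].
  - rewrite (Rabs_right (b - a)) by lra. apply abs_RInt_le_const; auto.
    intros t Ht; apply H. rewrite Rmin_left, Rmax_right; lra.
  - assert (Hf' : ex_RInt f b a) by (apply ex_RInt_swap; auto).
    replace (RInt f a b) with (- RInt f b a) by (rewrite (RInt_swap_R f b a Hf'); ring).
    rewrite Rabs_Ropp, (Rabs_left (b - a)) by lra. replace (- (b - a)) with (a - b) by ring.
    apply abs_RInt_le_const; [lra | exact Hf' |].
    intros t Ht; apply H. rewrite Rmin_right, Rmax_left; lra.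
Qed.

Lemma RInt_close f g a b eta : (forall z, cont_at f z) -> (forall z, cont_at g z) ->
  (forall t, Rmin a b <= t <= Rmax a b -> Rabs (f t - g t) <= eta) ->
  Rabs (RInt f a b - RInt g a b) <= Rabs (b - a) * eta.
Proof.
  intros Hf Hg H. rewrite <- RInt_sub by (apply ex_RInt_cont; auto).
  apply RInt_abs_bound; auto. apply ex_RInt_cont. intro; apply cont_at_minus; auto.
Qed.

Lemma RInt_pos_eq0 f a b m : 0 < m -> (forall z, cont_at f z) ->
  (forall z, Rmin a b <= z <= Rmax a b -> m <= f z) -> RInt f a b = 0 -> a = b.
Proof.
  intros Hm Hc Hf E.
  assert (Low : forall l r, l <= r -> (forall z, l <= z <= r -> m <= f z) -> m * (r - l) <= RInt f l r).
  { intros l r Hlr Hb. rewrite Rmult_comm, <- RInt_const_R.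
    apply RInt_le; auto.
    - apply ex_RInt_cont; intros; apply cont_at_const.
    - apply ex_RInt_cont; auto.
    - intros; apply Hb; lra. }
  destruct (Rtotal_order a b) as [H|[H|H]]; auto; exfalso.
  - assert (m * (b - a) <= RInt f a b).
    { apply Low; [lra|]. intros t Ht. apply Hf. rewrite Rmin_left, Rmax_right; lra. }
    nra.
  - rewrite RInt_swap_R in E by (apply ex_RInt_cont; auto).
    assert (m * (a - b) <= RInt f b a).
    { apply Low; [lra|]. intros t Ht. apply Hf. rewrite Rmin_right, Rmax_left; lra. }
    nra.
Qed.

Lemma RInt_FTC (F f : R -> R) a b :
  (forall x, Rmin a b <= x <= Rmax a b -> is_derive F x (f x)) ->
  (forall x, Rmin a b <= x <= Rmax a b -> cont_at f x) ->
  RInt f a b = F b - F a.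
Proof.
  intros H1 H2. apply is_RInt_unique.
  apply (is_RInt_derive (V := R_CompleteNormedModule) F f a b H1).
  intros; apply cont_at_continuous; auto.
Qed.

Lemma is_derive_primitive f a y : (forall z, cont_at f z) ->
  is_derive (fun y => RInt f a y) y (f y).
Proof.
  intros Hf. apply (is_derive_RInt (V := R_CompleteNormedModule) f (fun y => RInt f a y) a y).
  - apply filter_forall. intro b. apply RInt_correct. apply ex_RInt_cont; auto.
  - apply cont_at_continuous; auto.
Qed.

Lemma is_derive_mult_R f g x df dg : is_derive f x df -> is_derive g x dg ->
  is_derive (fun z => f z * g z) x (df * g x + f x * dg).
Proof. intros H1 H2. apply (is_derive_mult f g x df dg H1 H2). intros; apply Rmult_comm. Qed.

Lemma RInt_by_parts f f' g g' l r :
  (forall x, Rmin l r <= x <= Rmax l r ->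
     is_derive f x (f' x) /\ is_derive g x (g' x) /\ cont_at f' x /\ cont_at g' x) ->
  RInt (fun x => f' x * g x) l r = f r * g r - f l * g l - RInt (fun x => f x * g' x) l r.
Proof.
  intros H.
  assert (Hc : forall x, Rmin l r <= x <= Rmax l r ->
            cont_at (fun x => f' x * g x) x /\ cont_at (fun x => f x * g' x) x).
  { intros x Hx. destruct (H x Hx) as (H1 & H2 & H3 & H4).
    split; apply cont_at_mult; auto; eapply is_derive_cont_at; eauto. }
  assert (E : RInt (fun x => f' x * g x + f x * g' x) l r = f r * g r - f l * g l).
  { apply (RInt_FTC (fun x => f x * g x)).
    - intros x Hx. destruct (H x Hx) as (H1 & H2 & _). apply is_derive_mult_R; auto.
    - intros x Hx. apply cont_at_plus; apply Hc; auto. }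
  rewrite RInt_add in E by (apply ex_RInt_cont_on; intros; apply Hc; auto). lra.
Qed.

Lemma MVT_between f f' a b :
  (forall c, Rmin a b <= c <= Rmax a b -> derivable_pt_lim f c (f' c)) ->
  exists c, Rmin a b <= c <= Rmax a b /\ f b - f a = f' c * (b - a).
Proof.
  intros H. destruct (Rtotal_order a b) as [Hab|[Hab|Hab]].
  - destruct (MVT_cor2 f f' a b Hab) as [c [Hc Hc']].
    { intros c Hc; apply H; rewrite Rmin_left, Rmax_right; lra. }
    exists c. rewrite Rmin_left, Rmax_right by lra. split; [lra|]. rewrite Hc. ring.
  - subst. exists b. split; [split; [apply Rmin_l | apply Rmax_l] | ring].
  - destruct (MVT_cor2 f f' b a Hab) as [c [Hc Hc']].
    { intros c Hc; apply H; rewrite Rmin_right, Rmax_left; lra. }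
    exists c. rewrite Rmin_right, Rmax_left by lra. split; [lra|]. lra.
Qed.

Lemma const_on_interval (J : R -> Prop) (g : R -> R) :
  (forall s t r, J s -> J t -> s <= r <= t -> J r) ->
  (forall t, J t -> derivable_pt_lim g t 0) ->
  forall s t, J s -> J t -> g t = g s.
Proof.
  intros HJ Hg s t Hs Ht.
  destruct (MVT_between g (fun _ => 0) s t) as [c [_ E]].
  - intros c Hc. apply Hg. unfold Rmin, Rmax in Hc.
    destruct (Rle_dec s t); [apply (HJ s t) | apply (HJ t s)]; auto; lra.
  - lra.
Qed.

Lemma between_lt a b c r z : Rabs (a - c) < r -> Rabs (b - c) < r ->
  Rmin a b <= z <= Rmax a b -> Rabs (z - c) < r.
Proof.
  intros H H' Hz. apply Rabs_def2 in H. apply Rabs_def2 in H'.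
  apply Rabs_lt_between'. unfold Rmin, Rmax in Hz; destruct Rle_dec; lra.
Qed.

(** ** The Euclidean plane *)

Lemma sqrt_sum_sq_le a b : sqrt (a ^ 2 + b ^ 2) <= Rabs a + Rabs b.
Proof.
  pose proof (Rabs_pos a); pose proof (Rabs_pos b).
  rewrite <- (sqrt_pow2 (Rabs a + Rabs b)) by lra.
  apply sqrt_le_1_alt. rewrite <- (pow2_abs a), <- (pow2_abs b). nra.
Qed.

Lemma Rabs_le_sqrt_sum_sq a b : Rabs a <= sqrt (a ^ 2 + b ^ 2).
Proof.
  rewrite <- (sqrt_pow2 (Rabs a)) by apply Rabs_pos. apply sqrt_le_1_alt.
  rewrite pow2_abs. pose proof (pow2_ge_0 b). lra.
Qed.

Lemma dist2_lt_coords a b c d del : Rabs (a - c) < del / 2 -> Rabs (b - d) < del / 2 ->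
  dist2 (a, b) (c, d) < del.
Proof. intros H1 H2. unfold dist2, norm2; simpl. eapply Rle_lt_trans; [apply sqrt_sum_sq_le | lra]. Qed.

Lemma dist2_fst p q : Rabs (fst p - fst q) <= dist2 p q.
Proof. unfold dist2, norm2; simpl. apply Rabs_le_sqrt_sum_sq. Qed.

Lemma dist2_snd p q : Rabs (snd p - snd q) <= dist2 p q.
Proof. unfold dist2, norm2; simpl. rewrite Rplus_comm. apply Rabs_le_sqrt_sum_sq. Qed.

Definition cont2d (f : R -> R -> R) : Prop := forall x y, continuity_2d_pt f x y.

Lemma cont2_fst u : cont2 u -> cont2d (fun x y => fst (u (x, y))).
Proof.
  intros Hu x y [e He]. destruct (Hu (x, y) e He) as [d [Hd H]].
  exists (mkposreal (d / 2) ltac:(lra)). simpl. intros x' y' H1 H2.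
  eapply Rle_lt_trans; [apply dist2_fst|]. apply H, dist2_lt_coords; lra.
Qed.

Lemma cont2_snd u : cont2 u -> cont2d (fun x y => snd (u (x, y))).
Proof.
  intros Hu x y [e He]. destruct (Hu (x, y) e He) as [d [Hd H]].
  exists (mkposreal (d / 2) ltac:(lra)). simpl. intros x' y' H1 H2.
  eapply Rle_lt_trans; [apply dist2_snd|]. apply H, dist2_lt_coords; lra.
Qed.

Lemma cont2d_cont2s f : cont2d f -> cont2s f.
Proof.
  intros H x y e He. destruct (H x y (mkposreal e He)) as [d Hd].
  exists d. split; [apply cond_pos|]. intros x' y' Hxy. apply Hd.
  - eapply Rle_lt_trans; [apply (dist2_fst (x', y') (x, y)) | auto].
  - eapply Rle_lt_trans; [apply (dist2_snd (x', y') (x, y)) | auto].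
Qed.

Lemma cont2d_partial1 f x y : cont2d f -> cont_at (fun z => f z y) x.
Proof.
  intros H e He. destruct (H x y (mkposreal e He)) as [d Hd]. exists d; split; [apply cond_pos|].
  intros z Hz. apply Hd; auto. unfold Rminus; rewrite Rplus_opp_r, Rabs_R0; apply cond_pos.
Qed.

Lemma cont2d_partial2 f x y : cont2d f -> cont_at (fun z => f x z) y.
Proof.
  intros H e He. destruct (H x y (mkposreal e He)) as [d Hd]. exists d; split; [apply cond_pos|].
  intros z Hz. apply Hd; auto. unfold Rminus; rewrite Rplus_opp_r, Rabs_R0; apply cond_pos.
Qed.

Lemma cont2d_pt_var1 f x y : cont_at f x -> continuity_2d_pt (fun a _ => f a) x y.
Proof.
  intros H. apply (continuity_1d_2d_pt_comp f (fun a _ => a)); [|apply continuity_2d_pt_id1].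
  apply continuity_pt_filterlim, cont_at_continuous; auto.
Qed.

Lemma cont2d_pt_var2 f x y : cont_at f y -> continuity_2d_pt (fun _ b => f b) x y.
Proof.
  intros H. apply (continuity_1d_2d_pt_comp f (fun _ b => b)); [|apply continuity_2d_pt_id2].
  apply continuity_pt_filterlim, cont_at_continuous; auto.
Qed.

Lemma cont2d_mult_var1 f g : cont2d f -> (forall x, cont_at g x) ->
  cont2d (fun x y => f x y * g x).
Proof. intros Hf Hg x y. apply continuity_2d_pt_mult; auto. apply cont2d_pt_var1; auto. Qed.

(** Integrals depending continuously on a parameter: for jointly continuous
    [f], [y |-> int_l^r f(x,y) dx] is continuous (by uniform continuity of [f]
    on compact rectangles). *)
Lemma cont_at_param_RInt f l r y : cont2d f -> cont_at (fun y => RInt (fun x => f x y) l r) y.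
Proof.
  intros Hf e He.
  set (e' := e / (Rabs (r - l) + 1)).
  pose proof (Rabs_pos (r - l)).
  assert (He' : 0 < e') by (unfold e'; apply Rdiv_lt_0_compat; lra).
  destruct (uniform_continuity_2d f (Rmin l r) (Rmax l r) (y - 1) (y + 1)
     (fun x y _ _ => Hf x y) (mkposreal e' He')) as [d Hd].
  exists (Rmin d 1). split; [apply Rmin_glb_lt; [apply cond_pos | lra]|].
  intros y' Hy'. pose proof (Rmin_l d 1); pose proof (Rmin_r d 1).
  rewrite <- RInt_sub by (apply ex_RInt_cont; intro; apply cont2d_partial1, Hf).
  eapply Rle_lt_trans.
  - apply RInt_abs_bound with (M := e').
    + apply ex_RInt_cont. intro z. apply cont_at_minus; apply cont2d_partial1, Hf.
    + intros t Ht. left. apply (Hd t y t y'); try lra.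
      * apply Rabs_def2 in Hy'. lra.
      * unfold Rminus; rewrite Rplus_opp_r, Rabs_R0; apply cond_pos.
  - unfold e'. apply Rmult_lt_reg_r with (Rabs (r - l) + 1); [lra|].
    field_simplify; nra.
Qed.

Lemma cont_at_field_along u (X : R -> pt) t : cont2 u ->
  cont_at (fun t => fst (X t)) t -> cont_at (fun t => snd (X t)) t ->
  cont_at (fun t => fst (u (X t))) t /\ cont_at (fun t => snd (u (X t))) t.
Proof.
  intros Hu H1 H2.
  assert (K : forall e, 0 < e -> exists d, 0 < d /\
            forall y, Rabs (y - t) < d -> dist2 (u (X y)) (u (X t)) < e).
  { intros e He. destruct (Hu (X t) e He) as [d [Hd Hd']].
    destruct (H1 (d / 2) ltac:(lra)) as [d1 [Hd1 E1]].
    destruct (H2 (d / 2) ltac:(lra)) as [d2 [Hd2 E2]].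
    exists (Rmin d1 d2). split; [apply Rmin_glb_lt; auto|].
    intros y Hy. apply Hd'. pose proof (Rmin_l d1 d2). pose proof (Rmin_r d1 d2).
    rewrite (surjective_pairing (X y)), (surjective_pairing (X t)).
    apply dist2_lt_coords; [apply E1 | apply E2]; lra. }
  split; intros e He; destruct (K e He) as [d [Hd Hd']]; exists d; split; auto; intros y Hy.
  - eapply Rle_lt_trans; [apply dist2_fst | auto].
  - eapply Rle_lt_trans; [apply dist2_snd | auto].
Qed.

(** ** Smoothed indicator functions of intervals *)

Definition tent (e z : R) : R := Rmax 0 (e - Rabs z) / (e * e).

Lemma tent_nonneg e z : 0 < e -> 0 <= tent e z.
Proof.
  intros He. unfold tent. apply Rmult_le_pos; [apply Rmax_l|].
  left. apply Rinv_0_lt_compat. nra.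
Qed.

Lemma tent_outside e z : e <= Rabs z -> tent e z = 0.
Proof. intros H. unfold tent. rewrite Rmax_left by lra. unfold Rdiv; ring. Qed.

Lemma Rmax0_lipschitz a b : Rabs (Rmax 0 a - Rmax 0 b) <= Rabs (a - b).
Proof.
  unfold Rmax; destruct (Rle_dec 0 a); destruct (Rle_dec 0 b);
    unfold Rabs; repeat destruct Rcase_abs; lra.
Qed.

Lemma tent_cont e z : 0 < e -> cont_at (tent e) z.
Proof.
  intros He. assert (Hi : 0 < / (e * e)) by (apply Rinv_0_lt_compat; nra).
  apply cont_at_lipschitz with (K := / (e * e)); auto. intros y. unfold tent, Rdiv.
  rewrite <- Rmult_minus_distr_r, Rabs_mult, (Rabs_right (/ (e * e))) by lra.
  rewrite Rmult_comm. apply Rmult_le_compat_l; [lra|].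
  eapply Rle_trans; [apply Rmax0_lipschitz|].
  replace (e - Rabs y - (e - Rabs z)) with (- (Rabs y - Rabs z)) by ring.
  rewrite Rabs_Ropp. apply Rabs_triang_inv2.
Qed.

Lemma tent_mass e : 0 < e -> RInt (tent e) (-e) e = 1.
Proof.
  intros He.
  rewrite <- (RInt_chasles_R _ (-e) 0 e) by (apply ex_RInt_cont; intros; apply tent_cont; auto).
  rewrite (RInt_FTC (fun z => (e * z + z * z / 2) / (e * e))).
  rewrite (RInt_FTC (fun z => (e * z - z * z / 2) / (e * e)) _ 0 e).
  - as_real_eq. field. lra.
  - intros x Hx. rewrite Rmin_left, Rmax_right in Hx by lra.
    replace (tent e x) with ((e - x) / (e * e)).
    + auto_derive; auto. field; lra.
    + unfold tent. rewrite Rabs_right, Rmax_right; lra.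
  - intros; apply tent_cont; auto.
  - intros x Hx. rewrite Rmin_left, Rmax_right in Hx by lra.
    replace (tent e x) with ((e + x) / (e * e)).
    + auto_derive; auto. field; lra.
    + unfold tent. destruct (Req_dec x 0) as [->|Hx0].
      * rewrite Rabs_R0, Rmax_right; [f_equal; ring | lra].
      * rewrite Rabs_left, Rmax_right by lra. f_equal; ring.
  - intros; apply tent_cont; auto.
Qed.

Lemma tent_shift_mass e c l r : 0 < e -> l <= c - e -> c + e <= r ->
  RInt (fun x => tent e (x - c)) l r = 1.
Proof.
  intros He H1 H2.
  assert (Hi : forall a b, ex_RInt (fun x => tent e (x - c)) a b).
  { intros; apply ex_RInt_cont; intros; apply cont_at_shift, tent_cont; auto. }
  rewrite <- (RInt_chasles_R _ l (c - e) r), <- (RInt_chasles_R _ (c - e) (c + e) r) by auto.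
  rewrite (RInt_zero_on _ l (c - e)), (RInt_zero_on _ (c + e) r).
  - rewrite (RInt_ext (fun x => tent e (x - c)) (fun y => scal 1 (tent e (1 * y + - c)))).
    + rewrite (RInt_comp_lin (V := R_CompleteNormedModule))
        by (apply ex_RInt_cont; intros; apply tent_cont; auto).
      replace (1 * (c - e) + - c) with (- e) by ring.
      replace (1 * (c + e) + - c) with e by ring.
      rewrite tent_mass by auto. as_real_eq; ring.
    + intros x _. unfold scal; simpl; unfold mult; simpl. rewrite Rmult_1_l. f_equal. ring.
  - intros x Hx. rewrite Rmin_left, Rmax_right in Hx by lra.
    apply tent_outside. rewrite Rabs_right; lra.
  - intros x Hx. rewrite Rmin_left, Rmax_right in Hx by lra.
    apply tent_outside. rewrite Rabs_left; lra.
Qed.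

Definition step (e z : R) : R := RInt (tent e) (- e) z.

Lemma step_derive e c z : 0 < e -> is_derive (fun z => step e (z - c)) z (tent e (z - c)).
Proof.
  intros He.
  replace (tent e (z - c)) with (scal 1 (tent e (z - c))) by exact (Rmult_1_l _).
  apply (is_derive_comp (step e) (fun z => z - c) z (tent e (z - c)) 1).
  - apply (is_derive_RInt (V := R_CompleteNormedModule) (tent e) (step e) (- e)).
    + apply filter_forall. intro b. apply RInt_correct.
      apply ex_RInt_cont; intros; apply tent_cont; auto.
    + apply cont_at_continuous, tent_cont; auto.
  - auto_derive; auto.
Qed.

Lemma step_low e z : 0 < e -> z <= - e -> step e z = 0.
Proof.
  intros He Hz. apply RInt_zero_on. intros x Hx.
  rewrite Rmin_right, Rmax_left in Hx by lra. apply tent_outside. rewrite Rabs_left; lra.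
Qed.

Lemma step_high e z : 0 < e -> e <= z -> step e z = 1.
Proof.
  intros He Hz. unfold step.
  rewrite <- (RInt_chasles_R _ (-e) e z) by (apply ex_RInt_cont; intros; apply tent_cont; auto).
  rewrite tent_mass, (RInt_zero_on _ e z); auto.
  - as_real_eq; ring.
  - intros x Hx. rewrite Rmin_left, Rmax_right in Hx by lra.
    apply tent_outside. rewrite Rabs_right; lra.
Qed.

(** [window e c0 c1] is a [C^1] approximation of the indicator of [[c0, c1]]
    and [window' e c0 c1] is its derivative, a difference of two tents. *)
Definition window (e c0 c1 z : R) : R := step e (z - c0) - step e (z - c1).
Definition window' (e c0 c1 z : R) : R := tent e (z - c0) - tent e (z - c1).

Lemma window_derive e c0 c1 z : 0 < e -> is_derive (window e c0 c1) z (window' e c0 c1 z).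
Proof.
  intros He. apply (is_derive_minus (fun z => step e (z - c0)) (fun z => step e (z - c1)));
    apply step_derive; auto.
Qed.

Lemma window'_cont e c0 c1 z : 0 < e -> cont_at (window' e c0 c1) z.
Proof. intros He. apply cont_at_minus; apply cont_at_shift, tent_cont; auto. Qed.

Definition C1_fun (f f' : R -> R) : Prop := forall x, is_derive f x (f' x) /\ cont_at f' x.

Lemma window_C1 e c0 c1 : 0 < e -> C1_fun (window e c0 c1) (window' e c0 c1).
Proof. intros He z. split; [apply window_derive | apply window'_cont]; auto. Qed.

Lemma window_outside e c0 c1 L z : 0 < e -> Rabs c0 + e <= L -> Rabs c1 + e <= L ->
  L <= Rabs z -> window e c0 c1 z = 0.
Proof.
  intros He H0 H1 Hz. unfold window.
  pose proof (Rle_abs c0); pose proof (Rle_abs c1).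
  pose proof (Rle_abs (- c0)); pose proof (Rle_abs (- c1)). rewrite Rabs_Ropp in *.
  destruct (Rle_dec 0 z).
  - rewrite Rabs_right in Hz by lra. rewrite !step_high by (auto; lra). ring.
  - rewrite Rabs_left in Hz by lra. rewrite !step_low by (auto; lra). ring.
Qed.

(** Translated tents form an approximate identity: integrating [k] against
    [tent e (. - c)] recovers [k c] up to the oscillation of [k] on
    [[c - e, c + e]]. *)
Lemma tent_approx_identity k c l r e eta : 0 < e -> l <= c - e -> c + e <= r ->
  (forall x, l <= x <= r -> cont_at k x) ->
  (forall x, Rabs (x - c) <= e -> Rabs (k x - k c) <= eta) ->
  Rabs (RInt (fun x => tent e (x - c) * k x) l r - k c) <= eta.
Proof.
  intros He H1 H2 Hk Hb.
  assert (Heta : 0 <= eta).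
  { eapply Rle_trans; [apply Rabs_pos|]. apply (Hb c).
    unfold Rminus; rewrite Rplus_opp_r, Rabs_R0; lra. }
  assert (HT : forall x, cont_at (fun x => tent e (x - c)) x).
  { intros; apply cont_at_shift, tent_cont; auto. }
  assert (Hint : forall v, RInt (fun x => tent e (x - c) * v) l r = v).
  { intros v. rewrite RInt_mult_r, tent_shift_mass by (auto; apply ex_RInt_cont; auto).
    as_real_eq; ring. }
  assert (Hcont : forall x, l <= x <= r ->
            cont_at (fun x => tent e (x - c) * k x - tent e (x - c) * k c) x).
  { intros x Hx. apply cont_at_minus; apply cont_at_mult; auto; apply cont_at_const. }
  rewrite <- (Hint (k c)). rewrite <- RInt_sub.
  2: { apply ex_RInt_cont_on. intros z Hz. rewrite Rmin_left, Rmax_right in Hz by lra.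
       apply cont_at_mult; auto. }
  2: { apply ex_RInt_cont. intros z. apply cont_at_mult; auto. apply cont_at_const. }
  eapply Rle_trans.
  { apply abs_RInt_le; [lra|]. apply ex_RInt_cont_on. intros z Hz.
    rewrite Rmin_left, Rmax_right in Hz by lra. auto. }
  rewrite <- (Hint eta). apply RInt_le; [lra | | |].
  - apply ex_RInt_cont_on. intros z Hz. rewrite Rmin_left, Rmax_right in Hz by lra.
    apply cont_at_abs; auto.
  - apply ex_RInt_cont. intros z. apply cont_at_mult; auto. apply cont_at_const.
  - intros x Hx. rewrite <- Rmult_minus_distr_l, Rabs_mult.
    rewrite (Rabs_right (tent e (x - c))) by (apply Rle_ge, tent_nonneg; auto).
    destruct (Rle_dec (Rabs (x - c)) e).
    + apply Rmult_le_compat_l; [apply tent_nonneg | apply Hb]; auto.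
    + rewrite tent_outside by lra. lra.
Qed.

Lemma tent_approx_limit (k : R -> R) c eta l r : cont_at k c -> 0 < eta ->
  l + 1 <= c -> c + 1 <= r -> (forall z, cont_at k z) ->
  exists d, 0 < d /\ forall e, 0 < e -> e <= d ->
    Rabs (RInt (fun x => tent e (x - c) * k x) l r - k c) <= eta.
Proof.
  intros Hkc Heta H1 H2 Hk. destruct (Hkc eta Heta) as [d [Hd Hd']].
  exists (Rmin (d / 2) 1). split; [apply Rmin_glb_lt; lra|].
  intros e He1 He2. pose proof (Rmin_l (d / 2) 1). pose proof (Rmin_r (d / 2) 1).
  apply tent_approx_identity; auto; try lra. intros x Hx. left. apply Hd'. lra.
Qed.

Lemma tent_averages_eq (Q : R -> R) c0 c1 L : (forall z, cont_at Q z) ->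
  Rabs c0 + 1 <= L -> Rabs c1 + 1 <= L ->
  (forall e, 0 < e -> e <= 1 ->
     RInt (fun x => tent e (x - c0) * Q x) (-L) L = RInt (fun x => tent e (x - c1) * Q x) (-L) L) ->
  Q c0 = Q c1.
Proof.
  intros HQ H0 H1 Havg.
  pose proof (Rle_abs c0); pose proof (Rle_abs (- c0)).
  pose proof (Rle_abs c1); pose proof (Rle_abs (- c1)). rewrite Rabs_Ropp in *.
  apply Req_le_aux. intros [eta Heta]; simpl.
  destruct (tent_approx_limit Q c0 (eta / 2) (-L) L (HQ c0)) as [d0 [Hd0 E0]]; auto; try lra.
  destruct (tent_approx_limit Q c1 (eta / 2) (-L) L (HQ c1)) as [d1 [Hd1 E1]]; auto; try lra.
  pose proof (Rmin_l (Rmin d0 d1) 1); pose proof (Rmin_r (Rmin d0 d1) 1).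
  pose proof (Rmin_l d0 d1); pose proof (Rmin_r d0 d1).
  set (e := Rmin (Rmin d0 d1) 1) in *.
  assert (He : 0 < e) by (unfold e; repeat apply Rmin_glb_lt; lra).
  specialize (E0 e He ltac:(lra)). specialize (E1 e He ltac:(lra)).
  rewrite (Havg e He ltac:(lra)) in E0.
  apply Rabs_le_between in E0. apply Rabs_le_between in E1. apply Rabs_le. lra.
Qed.

Lemma window_average_limit (k : R -> R) x0 x1 L eta : (forall z, cont_at k z) ->
  Rabs x0 + 1 <= L -> Rabs x1 + 1 <= L -> 0 < eta ->
  exists d, 0 < d /\ forall e, 0 < e -> e <= d -> e <= 1 ->
    Rabs (RInt (fun x => k x * window e x0 x1 x) (-L) L - RInt k x0 x1) <= eta.
Proof.
  intros Hk H0 H1 Heta.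
  pose proof (Rle_abs x0); pose proof (Rle_abs (- x0)).
  pose proof (Rle_abs x1); pose proof (Rle_abs (- x1)). rewrite Rabs_Ropp in *.
  set (K := fun x => RInt k x0 x).
  assert (HK : forall x, is_derive K x (k x)) by (intro; apply is_derive_primitive; auto).
  assert (HKc : forall x, cont_at K x) by (intro; eapply is_derive_cont_at; eauto).
  destruct (tent_approx_limit K x0 (eta / 2) (-L) L (HKc x0)) as [d0 [Hd0 E0]]; auto; try lra.
  destruct (tent_approx_limit K x1 (eta / 2) (-L) L (HKc x1)) as [d1 [Hd1 E1]]; auto; try lra.
  exists (Rmin d0 d1). split; [apply Rmin_glb_lt; auto|].
  intros e He Hed He1. pose proof (Rmin_l d0 d1). pose proof (Rmin_r d0 d1).
  specialize (E0 e He ltac:(lra)). specialize (E1 e He ltac:(lra)).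
  rewrite (RInt_by_parts K k (window e x0 x1) (window' e x0 x1)).
  2: { intros x _. destruct (window_C1 e x0 x1 He x). auto. }
  rewrite !(window_outside e x0 x1 L); try lra.
  2: { rewrite Rabs_Ropp, Rabs_right; lra. }
  2: { rewrite Rabs_right; lra. }
  rewrite (RInt_ext _ (fun x => tent e (x - x0) * K x - tent e (x - x1) * K x)).
  2: { intros x _. unfold window'. as_real_eq; ring. }
  rewrite RInt_sub.
  2, 3: apply ex_RInt_cont; intro; apply cont_at_mult; auto; apply cont_at_shift, tent_cont; auto.
  assert (K x0 = 0) by exact (RInt_point (V := R_CompleteNormedModule) x0 k).
  fold (K x1).
  apply Rabs_le_between in E0. apply Rabs_le_between in E1. apply Rabs_le. lra.
Qed.

Lemma window'_average_limit (f : R -> R -> R) x0 x1 y0 y1 L eta : cont2d f ->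
  Rabs x0 + 1 <= L -> Rabs x1 + 1 <= L -> 0 < eta ->
  exists d, 0 < d /\ forall e, 0 < e -> e <= d -> e <= 1 -> forall y,
    Rmin y0 y1 <= y <= Rmax y0 y1 ->
    Rabs (RInt (fun x => f x y * window' e x0 x1 x) (-L) L - (f x0 y - f x1 y)) <= eta.
Proof.
  intros Hf H0 H1 Heta.
  destruct (uniform_continuity_2d f (-L) L (Rmin y0 y1) (Rmax y0 y1) (fun x y _ _ => Hf x y)
     (mkposreal (eta / 2) ltac:(lra))) as [d Hd]. simpl in Hd.
  pose proof (cond_pos d).
  exists (d / 2). split; [lra|].
  intros e He Hed He1 y Hy.
  rewrite (RInt_ext _ (fun x => tent e (x - x0) * f x y - tent e (x - x1) * f x y)).
  2: { intros x _. unfold window'. as_real_eq; ring. }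
  rewrite RInt_sub.
  2, 3: apply ex_RInt_cont; intro; apply cont_at_mult;
          [apply cont_at_shift, tent_cont; auto | apply cont2d_partial1, Hf].
  assert (B : forall c, Rabs c + 1 <= L ->
            Rabs (RInt (fun x => tent e (x - c) * f x y) (-L) L - f c y) <= eta / 2).
  { intros c Hc. pose proof (Rle_abs c). pose proof (Rle_abs (- c)). rewrite Rabs_Ropp in *.
    apply (tent_approx_identity (fun x => f x y)); try lra.
    - intros; apply cont2d_partial1, Hf.
    - intros x Hx. left. apply Rabs_le_between in Hx. apply Hd; try lra.
      + rewrite Rabs_minus_sym. apply Rle_lt_trans with e; [apply Rabs_le | ]; lra.
      + unfold Rminus; rewrite Rplus_opp_r, Rabs_R0; lra. }
  pose proof (B x0 H0) as B0. pose proof (B x1 H1) as B1.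
  apply Rabs_le_between in B0. apply Rabs_le_between in B1. apply Rabs_le. lra.
Qed.

(** ** The flux identity *)

Lemma RInt_is_RInt f a b v : RInt_is f a b v -> RInt f a b = v.
Proof. intros [pr Hpr]. rewrite <- Hpr. apply RInt_Reals. Qed.

Section Flux.
Variable u : pt -> pt.
Hypothesis Hu : cont2 u.
Hypothesis Hdiv : div_free u.
Let V1 x y := fst (u (x, y)).
Let V2 x y := snd (u (x, y)).
Let HV1 : cont2d V1 := cont2_fst u Hu.
Let HV2 : cont2d V2 := cont2_snd u Hu.

Lemma div_free_product (a a' b b' : R -> R) L : 0 < L ->
  C1_fun a a' -> C1_fun b b' ->
  (forall z, L <= Rabs z -> a z = 0) -> (forall z, L <= Rabs z -> b z = 0) ->
  RInt (fun y => b y * RInt (fun x => V1 x y * a' x) (-L) L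
               + b' y * RInt (fun x => V2 x y * a x) (-L) L) (-L) L = 0.
Proof.
  intros HL Ha Hb Ha0 Hb0.
  assert (Hca : forall x, cont_at a x) by (intro x; destruct (Ha x); eapply is_derive_cont_at; eauto).
  assert (Hcb : forall x, cont_at b x) by (intro x; destruct (Hb x); eapply is_derive_cont_at; eauto).
  assert (Hcst : forall c x, is_derive (fun _ : R => c) x 0)
    by (intros; apply is_derive_Reals, derivable_pt_lim_const).
  destruct (Hdiv (fun x y => a x * b y) (fun x y => a' x * b y) (fun x y => a x * b' y) L)
    as [F [HF1 HF2]].
  - repeat split; auto.
    + intros x y. apply is_derive_Reals.
      replace (a' x * b y) with (a' x * b y + a x * 0) by ring.
      apply (is_derive_mult_R a (fun _ => b y)); [apply Ha | apply Hcst].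
    + intros x y. apply is_derive_Reals.
      replace (a x * b' y) with (0 * b y + a x * b' y) by ring.
      apply (is_derive_mult_R (fun _ => a x) b); [apply Hcst | apply Hb].
    + apply cont2d_cont2s. intros x y.
      apply continuity_2d_pt_mult; [apply cont2d_pt_var1, Ha | apply cont2d_pt_var2, Hcb].
    + apply cont2d_cont2s. intros x y.
      apply continuity_2d_pt_mult; [apply cont2d_pt_var1, Hca | apply cont2d_pt_var2, Hb].
    + intros x y [H|H]; [rewrite Ha0 | rewrite Hb0]; auto; ring.
  - apply RInt_is_RInt in HF2. rewrite <- HF2. apply RInt_ext. intros y _.
    rewrite <- (RInt_is_RInt _ _ _ _ (HF1 y)).
    assert (H1 : forall x, cont_at (fun x => V1 x y * a' x) x).
    { intro; apply cont_at_mult; [apply cont2d_partial1, HV1 | apply Ha]. }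
    assert (H2 : forall x, cont_at (fun x => V2 x y * a x) x).
    { intro; apply cont_at_mult; [apply cont2d_partial1, HV2 | auto]. }
    rewrite <- (RInt_mult_l _ _ _ (b y)), <- (RInt_mult_l _ _ _ (b' y))
      by (apply ex_RInt_cont; auto).
    rewrite <- RInt_add
      by (apply ex_RInt_cont; intro; apply cont_at_mult; [apply cont_at_const | auto]).
    apply RInt_ext. intros x _. unfold V1, V2. as_real_eq; ring.
Qed.

Section WeightedFlux.
Variables (a a' : R -> R) (L : R).
Hypothesis HL : 0 < L.
Hypothesis Ha : C1_fun a a'.
Hypothesis Ha0 : forall z, L <= Rabs z -> a z = 0.

(** [hflux y] is the [a]-weighted flux of [V2] through the horizontal line at
    height [y]; [vflux y] is the [a']-weighted integral of [V1] on that line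
    and [vprim] is a primitive of [vflux]. *)
Let hflux y := RInt (fun x => V2 x y * a x) (-L) L.
Let vflux y := RInt (fun x => V1 x y * a' x) (-L) L.
Let vprim y := RInt vflux (-L) y.

Let Hca : forall x, cont_at a x.
Proof. intro x; destruct (Ha x); eapply is_derive_cont_at; eauto. Qed.

Let hflux_cont y : cont_at hflux y.
Proof. apply (cont_at_param_RInt (fun x y => V2 x y * a x)). apply cont2d_mult_var1; auto. Qed.

Let vflux_cont y : cont_at vflux y.
Proof. apply (cont_at_param_RInt (fun x y => V1 x y * a' x)). apply cont2d_mult_var1; auto. apply Ha. Qed.

Let vprim_derive y : is_derive vprim y (vflux y).
Proof. apply is_derive_primitive, vflux_cont. Qed.

(** Testing with [a(x)] times a window in [y] and integrating by parts in [y]: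
    [hflux - vprim] has the same tent averages at both ends of the window. *)
Lemma window_balance e y0 y1 : 0 < e -> Rabs y0 + e <= L -> Rabs y1 + e <= L ->
  RInt (fun y => tent e (y - y0) * (hflux y - vprim y)) (-L) L
  = RInt (fun y => tent e (y - y1) * (hflux y - vprim y)) (-L) L.
Proof.
  intros He Hy0 Hy1.
  assert (HPc : forall y, cont_at vprim y) by (intro; eapply is_derive_cont_at; eauto).
  pose proof (window_outside e y0 y1 L) as Hw0.
  pose proof (div_free_product a a' _ _ L HL Ha (window_C1 e y0 y1 He) Ha0
                (fun z Hz => Hw0 z He Hy0 Hy1 Hz)) as HW.
  fold V1 V2 hflux vflux in HW.
  assert (HWc : forall y, cont_at (window e y0 y1) y).
  { intro; eapply is_derive_cont_at, window_derive; auto. }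
  assert (HWd : forall y, cont_at (window' e y0 y1) y) by (intro; apply window'_cont; auto).
  rewrite RInt_add in HW by (apply ex_RInt_cont; intro; apply cont_at_mult; auto).
  rewrite (RInt_ext (fun y => window e y0 y1 y * vflux y) (fun y => vflux y * window e y0 y1 y))
    in HW by (intros; apply Rmult_comm).
  rewrite (RInt_by_parts vprim vflux (window e y0 y1) (window' e y0 y1)) in HW
    by (intros x _; destruct (window_C1 e y0 y1 He x); auto).
  rewrite !Hw0 in HW; auto.
  2: { rewrite Rabs_Ropp, Rabs_right; lra. }
  2: { rewrite Rabs_right; lra. }
  apply Rminus_diag_uniq. rewrite <- RInt_sub.
  2, 3: apply ex_RInt_cont; intro; apply cont_at_mult;
          [apply cont_at_shift, tent_cont | apply cont_at_minus]; auto.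
  rewrite (RInt_ext _ (fun y => window' e y0 y1 y * hflux y - vprim y * window' e y0 y1 y)).
  - rewrite RInt_sub by (apply ex_RInt_cont; intro; apply cont_at_mult; auto).
    unfold hflux in *; cbv beta in *; lra.
  - intros x _. unfold window'. as_real_eq; ring.
Qed.

(** Letting the window shrink to the indicator of [[y0, y1]]: the
    [a]-weighted flux of [V2] changes between heights [y0] and [y1] by the
    integral of [vflux]. *)
Lemma flux_weighted y0 y1 : Rabs y0 + 1 <= L -> Rabs y1 + 1 <= L ->
  RInt (fun x => V2 x y1 * a x) (-L) L - RInt (fun x => V2 x y0 * a x) (-L) L
  = RInt (fun y => RInt (fun x => V1 x y * a' x) (-L) L) y0 y1.
Proof.
  intros Hy0 Hy1. fold (hflux y0) (hflux y1) vflux.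
  assert (EQ : hflux y0 - vprim y0 = hflux y1 - vprim y1).
  { apply (tent_averages_eq (fun y => hflux y - vprim y) y0 y1 L); auto.
    - intro; apply cont_at_minus; [|eapply is_derive_cont_at]; eauto.
    - intros e He He1. apply window_balance; auto; lra. }
  unfold vprim in EQ.
  rewrite <- (RInt_chasles_R vflux (-L) y0 y1) in EQ by (apply ex_RInt_cont; auto). lra.
Qed.
End WeightedFlux.

(** Flux identity: the flux of [u] out of every rectangle [[x0,x1] x [y0,y1]]
    vanishes. *)
Lemma flux_rectangle x0 x1 y0 y1 :
  RInt (fun r => V2 r y1) x0 x1 - RInt (fun r => V2 r y0) x0 x1
  = RInt (fun s => V1 x0 s - V1 x1 s) y0 y1.
Proof.
  set (L := Rabs x0 + Rabs x1 + Rabs y0 + Rabs y1 + 2).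
  pose proof (Rabs_pos x0); pose proof (Rabs_pos x1).
  pose proof (Rabs_pos y0); pose proof (Rabs_pos y1); pose proof (Rabs_pos (y1 - y0)).
  assert (Hx0 : Rabs x0 + 1 <= L) by (unfold L; lra).
  assert (Hx1 : Rabs x1 + 1 <= L) by (unfold L; lra).
  assert (Hy0 : Rabs y0 + 1 <= L) by (unfold L; lra).
  assert (Hy1 : Rabs y1 + 1 <= L) by (unfold L; lra).
  (* Apply [flux_weighted] to the window of [[x0, x1]] and let [e -> 0]: each
     smoothed term is within [eta'] of the corresponding exact one. *)
  apply Req_le_aux. intros [eta Heta]; simpl.
  set (eta' := eta / (4 + 2 * Rabs (y1 - y0))).
  assert (Heta' : 0 < eta') by (unfold eta'; apply Rdiv_lt_0_compat; lra).
  assert (Hk : forall y z, cont_at (fun r => V2 r y) z) by (intros; apply cont2d_partial1, HV2).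
  destruct (window_average_limit _ x0 x1 L eta' (Hk y0) Hx0 Hx1 Heta') as [da [Hda Ea]].
  destruct (window_average_limit _ x0 x1 L eta' (Hk y1) Hx0 Hx1 Heta') as [db [Hdb Eb]].
  destruct (window'_average_limit V1 x0 x1 y0 y1 L eta' HV1 Hx0 Hx1 Heta') as [dc [Hdc Ec]].
  pose proof (Rmin_l (Rmin da db) (Rmin dc 1)); pose proof (Rmin_r (Rmin da db) (Rmin dc 1)).
  pose proof (Rmin_l da db); pose proof (Rmin_r da db).
  pose proof (Rmin_l dc 1); pose proof (Rmin_r dc 1).
  set (e := Rmin (Rmin da db) (Rmin dc 1)) in *.
  assert (He : 0 < e) by (unfold e; repeat apply Rmin_glb_lt; lra).
  specialize (Ea e He ltac:(lra) ltac:(lra)). specialize (Eb e He ltac:(lra) ltac:(lra)).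
  specialize (Ec e He ltac:(lra) ltac:(lra)).
  pose proof (window_outside e x0 x1 L) as Hw0.
  pose proof (flux_weighted (window e x0 x1) (window' e x0 x1) L ltac:(lra) (window_C1 e x0 x1 He)
                (fun z Hz => Hw0 z He ltac:(lra) ltac:(lra) Hz) y0 y1 Hy0 Hy1) as HS.
  assert (HA : forall y, cont_at (fun y => RInt (fun x => V1 x y * window' e x0 x1 x) (-L) L) y).
  { intro. apply (cont_at_param_RInt (fun x y => V1 x y * window' e x0 x1 x)).
    apply cont2d_mult_var1; auto. intro; apply window'_cont; auto. }
  assert (HI : Rabs (RInt (fun y => RInt (fun x => V1 x y * window' e x0 x1 x) (-L) L) y0 y1
                 - RInt (fun s => V1 x0 s - V1 x1 s) y0 y1) <= Rabs (y1 - y0) * eta').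
  { apply RInt_close; auto. intro. apply cont_at_minus; apply cont2d_partial2, HV1. }
  apply Rabs_le_between in Ea. apply Rabs_le_between in Eb. apply Rabs_le_between in HI.
  assert (Rabs (y1 - y0) * eta' * 2 + 4 * eta' = eta) by (unfold eta'; field; lra).
  apply Rabs_le. split; nra.
Qed.
End Flux.

(** ** The stream function *)

(** [stream u x y] integrates [V1 dy - V2 dx] along the path from the origin
    to [(x, 0)] and then to [(x, y)]. *)
Definition stream (u : pt -> pt) (x y : R) : R :=
  RInt (fun s => fst (u (x, s))) 0 y - RInt (fun r => snd (u (r, 0))) 0 x.

Section Stream.
Variable u : pt -> pt.
Hypothesis Hu : cont2 u.
Hypothesis Hdiv : div_free u.
Let V1 x y := fst (u (x, y)).
Let V2 x y := snd (u (x, y)).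
Let HV1 : cont2d V1 := cont2_fst u Hu.
Let HV2 : cont2d V2 := cont2_snd u Hu.

Lemma stream_dy x y y' : stream u x y' - stream u x y = RInt (fun s => V1 x s) y y'.
Proof.
  unfold stream. rewrite <- (RInt_chasles_R (fun s => fst (u (x, s))) 0 y y').
  - fold (V1 x). unfold V1. lra.
  - apply ex_RInt_cont; intro; apply (cont2d_partial2 V1), HV1.
  - apply ex_RInt_cont; intro; apply (cont2d_partial2 V1), HV1.
Qed.

(** The horizontal increment needs the flux identity, since the defining path
    changes when [x] changes. *)
Lemma stream_dx x x' y : stream u x' y - stream u x y = - RInt (fun r => V2 r y) x x'.
Proof.
  pose proof (flux_rectangle u Hu Hdiv x x' 0 y) as F. fold V1 V2 in F.
  rewrite RInt_sub in F by (apply ex_RInt_cont; intro; apply (cont2d_partial2 V1), HV1).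
  unfold stream. fold (V1 x') (V1 x).
  rewrite <- (RInt_chasles_R (fun r => snd (u (r, 0))) 0 x x')
    by (apply ex_RInt_cont; intro; apply (cont2d_partial1 V2), HV2).
  fold V2. unfold V1, V2 in *. lra.
Qed.

Lemma stream_differentiable x y : differentiable_pt_lim (stream u) x y (- V2 x y) (V1 x y).
Proof.
  intros eps. pose proof (cond_pos eps).
  destruct (HV1 x y (mkposreal (eps / 2) ltac:(lra))) as [d1 Hd1].
  destruct (HV2 x y (mkposreal (eps / 2) ltac:(lra))) as [d2 Hd2].
  simpl in Hd1, Hd2.
  assert (Hd : 0 < Rmin d1 d2) by (apply Rmin_glb_lt; apply cond_pos).
  exists (mkposreal _ Hd). simpl. intros x' y' Hx' Hy'.
  pose proof (Rmin_l d1 d2); pose proof (Rmin_r d1 d2).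
  pose proof (cond_pos d1); pose proof (cond_pos d2).
  replace (stream u x' y' - stream u x y)
    with ((stream u x' y' - stream u x y') + (stream u x y' - stream u x y)) by ring.
  rewrite stream_dx, stream_dy.
  (* Compare both increments with integrals of the frozen values at [(x, y)]. *)
  assert (B1 : Rabs (RInt (fun r => V2 r y') x x' - RInt (fun _ => V2 x y) x x')
               <= Rabs (x' - x) * (eps / 2)).
  { apply RInt_close; [intro; apply (cont2d_partial1 V2), HV2 | intro; apply cont_at_const |].
    intros t Ht. left. apply Hd2; [|lra].
    apply (between_lt x x'); [unfold Rminus; rewrite Rplus_opp_r, Rabs_R0 | |]; auto; lra. }
  assert (B2 : Rabs (RInt (fun s => V1 x s) y y' - RInt (fun _ => V1 x y) y y')
               <= Rabs (y' - y) * (eps / 2)).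
  { apply RInt_close; [intro; apply (cont2d_partial2 V1), HV1 | intro; apply cont_at_const |].
    intros t Ht. left. apply Hd1.
    - unfold Rminus; rewrite Rplus_opp_r, Rabs_R0; lra.
    - apply (between_lt y y'); [unfold Rminus; rewrite Rplus_opp_r, Rabs_R0 | |]; auto; lra. }
  rewrite !RInt_const_R in B1, B2.
  replace (- RInt (fun r => V2 r y') x x' + RInt (fun s => V1 x s) y y' -
             (- V2 x y * (x' - x) + V1 x y * (y' - y)))
    with (- (RInt (fun r => V2 r y') x x' - (x' - x) * V2 x y)
          + (RInt (fun s => V1 x s) y y' - (y' - y) * V1 x y)) by ring.
  eapply Rle_trans; [apply Rabs_triang|]. rewrite Rabs_Ropp.
  pose proof (Rmax_l (Rabs (x' - x)) (Rabs (y' - y))).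
  pose proof (Rmax_r (Rabs (x' - x)) (Rabs (y' - y))). nra.
Qed.
End Stream.

(** The stream function is a first integral: it is constant along every
    solution, since its gradient [(-V2, V1)] is orthogonal to [u]. *)
Lemma stream_conserved u a J X : cont2 u -> div_free u -> open_int_set J -> J 0 ->
  is_solution u a J X -> forall t, J t ->
  stream u (fst (X t)) (snd (X t)) = stream u (fst a) (snd a).
Proof.
  intros Hu Hdiv [HJ _] HJ0 [HX0 HX] t Ht. rewrite <- HX0.
  apply (const_on_interval J (fun t => stream u (fst (X t)) (snd (X t)))); auto.
  intros s Hs. destruct (HX s Hs) as [D1 D2].
  pose proof (derivable_pt_lim_comp_2d (stream u) (fun t => fst (X t)) (fun t => snd (X t)) s
     _ _ _ _ (stream_differentiable u Hu Hdiv (fst (X s)) (snd (X s))) D1 D2) as H.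
  cbv beta in H.
  replace (u (fst (X s), snd (X s))) with (u (X s)) in H by (rewrite <- surjective_pairing; auto).
  replace 0 with (- snd (u (X s)) * fst (u (X s)) + fst (u (X s)) * snd (u (X s))) by ring.
  exact H.
Qed.

(** ** A comparison lemma for strictly increasing scalar functions

  The matching time [tau t = y1^-1 (x1 t)] has derivative
  [wx t / wy (tau t) = 1] and [tau s = s], so [tau] is the identity. *)

Section Comparison.
Variables x1 y1 wx wy : R -> R.
Variables s del m M : R.
Hypothesis Hdel : 0 < del.
Hypothesis Hm : 0 < m.
Hypothesis HD : forall t, Rabs (t - s) < del ->
  derivable_pt_lim x1 t (wx t) /\ derivable_pt_lim y1 t (wy t).
Hypothesis HB : forall t, Rabs (t - s) < del -> (m <= wx t <= M) /\ (m <= wy t <= M).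
Hypothesis HC : forall t, Rabs (t - s) < del -> cont_at wx t /\ cont_at wy t.
Hypothesis HL : forall t t', Rabs (t - s) < del -> Rabs (t' - s) < del ->
  x1 t = y1 t' -> wx t = wy t'.
Hypothesis H0 : x1 s = y1 s.

Lemma mvt_x1 a b : Rabs (a - s) < del -> Rabs (b - s) < del ->
  exists c, Rmin a b <= c <= Rmax a b /\ Rabs (c - s) < del /\ x1 b - x1 a = wx c * (b - a).
Proof.
  intros Ha Hb. destruct (MVT_between x1 wx a b) as [c [Hc E]].
  - intros c Hc. exact (proj1 (HD c (between_lt a b s del c Ha Hb Hc))).
  - exists c. split; [|split]; auto. apply (between_lt a b s del c Ha Hb Hc).
Qed.

Lemma mvt_y1 a b : Rabs (a - s) < del -> Rabs (b - s) < del ->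
  exists c, Rmin a b <= c <= Rmax a b /\ Rabs (c - s) < del /\ y1 b - y1 a = wy c * (b - a).
Proof.
  intros Ha Hb. destruct (MVT_between y1 wy a b) as [c [Hc E]].
  - intros c Hc. exact (proj2 (HD c (between_lt a b s del c Ha Hb Hc))).
  - exists c. split; [|split]; auto. apply (between_lt a b s del c Ha Hb Hc).
Qed.

Lemma y1_injective a b : Rabs (a - s) < del -> Rabs (b - s) < del -> y1 a = y1 b -> a = b.
Proof.
  intros Ha Hb E. destruct (mvt_y1 a b Ha Hb) as [c [_ [Hc E']]].
  destruct (HB c Hc) as [_ [Hw _]].
  assert (Hz : wy c * (b - a) = 0) by lra.
  apply Rmult_integral in Hz. destruct Hz; lra.
Qed.

(** Radius on which the matching time is defined. *)
Let d2 := m * del / (2 * M).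

Lemma s_in_ball : Rabs (s - s) < del.
Proof. unfold Rminus; rewrite Rplus_opp_r, Rabs_R0; auto. Qed.

Lemma m_le_M : m <= M.
Proof. destruct (HB s s_in_ball) as [[? ?] _]. lra. Qed.

Lemma d2_pos : 0 < d2.
Proof. pose proof m_le_M. unfold d2. apply Rdiv_lt_0_compat; nra. Qed.

Lemma d2_le : d2 <= del / 2.
Proof.
  pose proof m_le_M. unfold d2.
  apply Rmult_le_reg_r with (2 * M); [lra|]. field_simplify; nra.
Qed.

(** For [t] near [s], the value [x1 t] is attained by [y1] at a time within
    [del / 2] of [s]: [y1] climbs at rate at least [m] while [x1] moves at
    rate at most [M]. *)
Lemma preimage_exists t : Rabs (t - s) < d2 ->
  exists t', Rabs (t' - s) <= del / 2 /\ y1 t' = x1 t.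
Proof.
  intros Ht. pose proof m_le_M. pose proof d2_le.
  assert (Ylo : y1 (s - del / 2) <= y1 s - m * del / 2).
  { destruct (mvt_y1 (s - del / 2) s) as [c [_ [Hc E]]]; [|apply s_in_ball|].
    - replace (s - del / 2 - s) with (- (del / 2)) by ring. rewrite Rabs_Ropp, Rabs_right; lra.
    - destruct (HB c Hc) as [_ [Hw _]]. nra. }
  assert (Yhi : y1 s + m * del / 2 <= y1 (s + del / 2)).
  { destruct (mvt_y1 s (s + del / 2)) as [c [_ [Hc E]]]; [apply s_in_ball| |].
    - replace (s + del / 2 - s) with (del / 2) by ring. rewrite Rabs_right; lra.
    - destruct (HB c Hc) as [_ [Hw _]]. nra. }
  assert (Xt : Rabs (x1 t - x1 s) <= m * del / 2).
  { destruct (mvt_x1 s t) as [c [_ [Hc E]]]; [apply s_in_ball | lra |].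
    rewrite E, Rabs_mult. destruct (HB c Hc) as [[Hw1 Hw2] _].
    rewrite (Rabs_right (wx c)) by lra.
    apply Rle_trans with (M * d2); [|unfold d2; right; field; lra].
    apply Rmult_le_compat; try lra; apply Rabs_pos. }
  apply Rabs_le_between in Xt.
  set (clamp := fun z => Rmax (s - del / 2) (Rmin (s + del / 2) z)).
  assert (Hclamp : forall z, s - del / 2 <= z <= s + del / 2 -> clamp z = z).
  { intros z Hz. unfold clamp. rewrite Rmin_right, Rmax_right; lra. }
  assert (Hg : forall z, continuous (fun z => y1 (clamp z)) z).
  { intro z. apply cont_at_continuous, (cont_at_comp clamp y1).
    - apply cont_at_lipschitz with (K := 1); [lra|]. intro y. unfold clamp, Rmax, Rmin.
      repeat destruct Rle_dec; unfold Rabs; repeat destruct Rcase_abs; lra.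
    - eapply derivable_pt_lim_cont_at, HD. apply Rabs_lt_between'.
      unfold clamp, Rmax, Rmin; repeat destruct Rle_dec; lra. }
  destruct (IVT_gen_consistent _ (s - del / 2) (s + del / 2) (x1 t) Hg) as [z [Hz Ez]].
  { rewrite !Hclamp, Rmin_left, Rmax_right; lra. }
  rewrite Rmin_left, Rmax_right in Hz by lra.
  exists z. rewrite Hclamp in Ez by lra. split; [apply Rabs_le; lra | auto].
Qed.

Lemma matching_time_exists : exists tau : R -> R, tau s = s /\
  forall t, Rabs (t - s) < d2 -> Rabs (tau t - s) <= del / 2 /\ y1 (tau t) = x1 t.
Proof.
  set (P := fun t t' => Rabs (t - s) < d2 -> Rabs (t' - s) <= del / 2 /\ y1 t' = x1 t).
  assert (HP : forall t, exists t', P t t').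
  { intro t. destruct (Rlt_dec (Rabs (t - s)) d2) as [Ht|Ht].
    - destruct (preimage_exists t Ht) as [t' Ht']. exists t'. intros _. auto.
    - exists 0. intro; contradiction. }
  set (tau := fun t => epsilon (inhabits 0) (P t)).
  assert (Htau : forall t, P t (tau t)) by (intro t; apply epsilon_spec, HP).
  exists tau. split; auto.
  pose proof d2_pos. pose proof d2_le. pose proof s_in_ball.
  destruct (Htau s) as [Hs1 Hs2]; [unfold Rminus; rewrite Rplus_opp_r, Rabs_R0; auto|].
  apply y1_injective; auto; [lra | congruence].
Qed.

Section MatchingTime.
Variable tau : R -> R.
Hypothesis Htau : forall t, Rabs (t - s) < d2 ->
  Rabs (tau t - s) <= del / 2 /\ y1 (tau t) = x1 t.

Lemma matching_time_increment t t' : Rabs (t - s) < d2 -> Rabs (t' - s) < d2 ->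
  exists eta xi, Rmin t t' <= eta <= Rmax t t' /\ Rabs (eta - s) < del /\
    Rmin (tau t) (tau t') <= xi <= Rmax (tau t) (tau t') /\ Rabs (xi - s) < del /\
    wy xi * (tau t' - tau t) = wx eta * (t' - t) /\
    Rabs (tau t' - tau t) * m <= M * Rabs (t' - t).
Proof.
  intros Ht Ht'. pose proof d2_le.
  destruct (Htau t Ht) as [Tt1 Tt2]. destruct (Htau t' Ht') as [Tt1' Tt2'].
  destruct (mvt_x1 t t') as [eta [Heta1 [Heta2 Ex1]]]; [lra | lra |].
  destruct (mvt_y1 (tau t) (tau t')) as [xi [Hxi1 [Hxi2 Ey1]]]; [lra | lra |].
  rewrite Tt2, Tt2' in Ey1.
  destruct (HB eta Heta2) as [[Bx1 Bx2] _]. destruct (HB xi Hxi2) as [_ [By1 By2]].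
  assert (Ek : wy xi * (tau t' - tau t) = wx eta * (t' - t)) by lra.
  exists eta, xi. do 5 (split; [assumption|]).
  assert (HH : Rabs (wy xi * (tau t' - tau t)) = Rabs (wx eta * (t' - t))) by (rewrite Ek; auto).
  rewrite !Rabs_mult, (Rabs_right (wy xi)), (Rabs_right (wx eta)) in HH by lra.
  pose proof (Rabs_pos (tau t' - tau t)); pose proof (Rabs_pos (t' - t)). nra.
Qed.

(** The matching time moves at unit speed: its difference quotients are
    ratios [wx eta / wy xi] with [eta -> t], [xi -> tau t], and
    [wx t = wy (tau t)]. *)
Lemma matching_time_derive t : Rabs (t - s) < d2 -> derivable_pt_lim tau t 1.
Proof.
  intros Ht eps Heps. pose proof d2_le. pose proof m_le_M.
  destruct (Htau t Ht) as [Tt1 Tt2].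
  assert (Ht' : Rabs (t - s) < del) by lra.
  assert (Htt : Rabs (tau t - s) < del) by lra.
  assert (Ew : wx t = wy (tau t)) by (apply HL; auto).
  destruct (HC t Ht') as [Cx _]. destruct (HC (tau t) Htt) as [_ Cy].
  destruct (Cx (eps * m / 2) ltac:(nra)) as [e1 [He1 E1]].
  destruct (Cy (eps * m / 2) ltac:(nra)) as [e2 [He2 E2]].
  set (r := d2 - Rabs (t - s)).
  set (d := Rmin e1 (Rmin (e2 * m / M) r)).
  pose proof (Rmin_l e1 (Rmin (e2 * m / M) r)). pose proof (Rmin_r e1 (Rmin (e2 * m / M) r)).
  pose proof (Rmin_l (e2 * m / M) r). pose proof (Rmin_r (e2 * m / M) r).
  assert (Hd : 0 < d).
  { unfold d, r. repeat apply Rmin_glb_lt; [auto | apply Rdiv_lt_0_compat; nra | lra]. }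
  exists (mkposreal _ Hd). simpl. intros h Hh0 Hh.
  assert (Hth : Rabs (t + h - s) < d2).
  { replace (t + h - s) with ((t - s) + h) by ring.
    eapply Rle_lt_trans; [apply Rabs_triang | unfold d, r in *; lra]. }
  destruct (matching_time_increment t (t + h) Ht Hth)
    as [eta [xi (Heta1 & Heta2 & Hxi1 & Hxi2 & Ek & Hk)]].
  replace (t + h - t) with h in Ek, Hk by ring.
  destruct (HB eta Heta2) as [[Bx1 Bx2] _]. destruct (HB xi Hxi2) as [_ [By1 By2]].
  assert (Hhm : M * Rabs h < e2 * m).
  { replace (e2 * m) with (M * (e2 * m / M)) by (field; lra).
    apply Rmult_lt_compat_l; [lra | unfold d in *; lra]. }
  assert (Hk2 : Rabs (tau (t + h) - tau t) < e2) by nra.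
  assert (Hxi3 : Rabs (xi - tau t) < e2).
  { apply (between_lt (tau t) (tau (t + h))); auto.
    unfold Rminus; rewrite Rplus_opp_r, Rabs_R0; auto. }
  assert (Heta3 : Rabs (eta - t) < e1).
  { apply (between_lt t (t + h)); auto.
    - unfold Rminus; rewrite Rplus_opp_r, Rabs_R0; auto.
    - replace (t + h - t) with h by ring. unfold d in *; lra. }
  specialize (E1 eta Heta3). specialize (E2 xi Hxi3).
  replace ((tau (t + h) - tau t) / h - 1) with ((wx eta - wy xi) / wy xi).
  2: { apply Rmult_eq_reg_r with (h * wy xi).
       - field_simplify; lra.
       - intro Hz; apply Rmult_integral in Hz; destruct Hz; lra. }
  unfold Rdiv. rewrite Rabs_mult, Rabs_inv, (Rabs_right (wy xi)) by lra.
  apply Rmult_lt_reg_r with (wy xi); [lra|].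
  rewrite Rmult_assoc, Rinv_l, Rmult_1_r by lra.
  replace (wx eta - wy xi) with ((wx eta - wx t) + (wy (tau t) - wy xi)) by (rewrite Ew; ring).
  eapply Rle_lt_trans; [apply Rabs_triang|]. rewrite (Rabs_minus_sym (wy (tau t))). nra.
Qed.
End MatchingTime.

Lemma comparison : exists d, 0 < d /\ forall t, Rabs (t - s) < d -> x1 t = y1 t.
Proof.
  destruct matching_time_exists as [tau [Hts Htau]].
  exists d2. split; [apply d2_pos|]. intros t Ht.
  assert (Eg : tau t - t = tau s - s).
  { apply (const_on_interval (fun t => Rabs (t - s) < d2) (fun t => tau t - t)); auto.
    - intros a b c Ha Hb Hc. apply Rabs_lt_between' in Ha. apply Rabs_lt_between' in Hb.
      apply Rabs_lt_between'. lra.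
    - intros t' Ht'. replace 0 with (1 - 1) by ring.
      apply derivable_pt_lim_minus; [apply (matching_time_derive tau) | apply derivable_pt_lim_id]; auto.
    - unfold Rminus; rewrite Rplus_opp_r, Rabs_R0. apply d2_pos. }
  rewrite Hts in Eg. destruct (Htau t Ht) as [_ E].
  replace (tau t) with t in E by lra. auto.
Qed.
End Comparison.

(** ** Local uniqueness of trajectories *)

Definition in_box (p : pt) (r : R) (q : pt) : Prop :=
  Rabs (fst q - fst p) < r /\ Rabs (snd q - snd p) < r.

Definition lin (alpha beta : R) (q : pt) : R := alpha * fst q + beta * snd q.

Lemma lin_field_bounds u p alpha beta : cont2 u -> 0 < lin alpha beta (u p) ->
  exists rho, 0 < rho /\ forall q, in_box p rho q ->
    lin alpha beta (u p) / 2 <= lin alpha beta (u q) <= 3 * lin alpha beta (u p) / 2.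
Proof.
  intros Hu Hc. set (c := lin alpha beta (u p)) in *.
  set (K := Rabs alpha + Rabs beta + 1).
  pose proof (Rabs_pos alpha); pose proof (Rabs_pos beta).
  assert (HK : 0 < K) by (unfold K; lra).
  destruct (Hu p (c / (2 * K)) ltac:(apply Rdiv_lt_0_compat; lra)) as [d [Hd Hud]].
  exists (d / 2). split; [lra|]. intros q [H1 H2].
  assert (Hq : dist2 (u q) (u p) < c / (2 * K)).
  { apply Hud. rewrite (surjective_pairing q), (surjective_pairing p).
    apply dist2_lt_coords; lra. }
  assert (Hdiff : Rabs (lin alpha beta (u q) - c) <= K * dist2 (u q) (u p)).
  { unfold c, lin, K.
    replace (alpha * fst (u q) + beta * snd (u q) - (alpha * fst (u p) + beta * snd (u p)))
      with (alpha * (fst (u q) - fst (u p)) + beta * (snd (u q) - snd (u p))) by ring.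
    eapply Rle_trans; [apply Rabs_triang|]. rewrite !Rabs_mult.
    pose proof (dist2_fst (u q) (u p)); pose proof (dist2_snd (u q) (u p)).
    pose proof (Rabs_pos (fst (u q) - fst (u p))); pose proof (Rabs_pos (snd (u q) - snd (u p))).
    nra. }
  assert (K * dist2 (u q) (u p) < c / 2).
  { apply Rmult_lt_compat_l with (r := K) in Hq; auto.
    replace (K * (c / (2 * K))) with (c / 2) in Hq by (field; lra). auto. }
  apply Rabs_le_between in Hdiff. lra.
Qed.

Lemma stream_level_fst u p rho sigma m : cont2 u -> 0 < m ->
  (forall q, in_box p rho q -> m <= sigma * fst (u q)) ->
  forall q q', in_box p rho q -> in_box p rho q' -> fst q = fst q' ->
  stream u (fst q) (snd q) = stream u (fst q') (snd q') -> q = q'.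
Proof.
  intros Hu Hm Hbox q q' Hq Hq' E Es.
  assert (HV1 := cont2_fst u Hu).
  assert (Hint : RInt (fun z => sigma * fst (u (fst q, z))) (snd q) (snd q') = 0).
  { rewrite RInt_mult_l by (apply ex_RInt_cont; intro; apply (cont2d_partial2 _ _ _ HV1)).
    rewrite <- (stream_dy u Hu (fst q)), <- E in *. rewrite Es. as_real_eq; ring. }
  apply RInt_pos_eq0 with (m := m) in Hint; auto.
  - rewrite (surjective_pairing q), (surjective_pairing q'), E, Hint. auto.
  - intro z. apply cont_at_mult; [apply cont_at_const | apply (cont2d_partial2 _ _ _ HV1)].
  - intros z Hz. apply Hbox. split; simpl; [apply Hq | apply (between_lt (snd q) (snd q')); auto].
    + apply Hq.
    + apply Hq'.
Qed.

Lemma stream_level_snd u p rho sigma m : cont2 u -> div_free u -> 0 < m ->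
  (forall q, in_box p rho q -> m <= sigma * snd (u q)) ->
  forall q q', in_box p rho q -> in_box p rho q' -> snd q = snd q' ->
  stream u (fst q) (snd q) = stream u (fst q') (snd q') -> q = q'.
Proof.
  intros Hu Hdiv Hm Hbox q q' Hq Hq' E Es.
  assert (HV2 := cont2_snd u Hu).
  assert (Hint : RInt (fun z => sigma * snd (u (z, snd q))) (fst q) (fst q') = 0).
  { rewrite RInt_mult_l by (apply ex_RInt_cont; intro; apply (cont2d_partial1 _ _ _ HV2)).
    pose proof (stream_dx u Hu Hdiv (fst q) (fst q') (snd q)) as Hdx. cbv beta in Hdx.
    rewrite E in Es, Hdx |- *. rewrite Es in Hdx.
    as_real_eq. replace (RInt (fun z => snd (u (z, snd q'))) (fst q) (fst q')) with 0 by lra. ring. }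
  apply RInt_pos_eq0 with (m := m) in Hint; auto.
  - rewrite (surjective_pairing q), (surjective_pairing q'), E, Hint. auto.
  - intro z. apply cont_at_mult; [apply cont_at_const | apply (cont2d_partial1 _ _ _ HV2)].
  - intros z Hz. apply Hbox. split; simpl; [apply (between_lt (fst q) (fst q')); auto | apply Hq].
    + apply Hq.
    + apply Hq'.
Qed.

Lemma solution_cont u a J X t : is_solution u a J X -> J t ->
  cont_at (fun t => fst (X t)) t /\ cont_at (fun t => snd (X t)) t.
Proof. intros [_ H] Ht. destruct (H t Ht). split; eapply derivable_pt_lim_cont_at; eauto. Qed.

Section Local.
Variable u : pt -> pt.
Hypothesis Hu : cont2 u.
Hypothesis Hdiv : div_free u.
Variable a : pt.
Variable J : R -> Prop.
Hypothesis HJ : open_int_set J.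
Hypothesis HJ0 : J 0.
Variables X Y : R -> pt.
Hypothesis HX : is_solution u a J X.
Hypothesis HY : is_solution u a J Y.

Lemma stream_X_Y t t' : J t -> J t' ->
  stream u (fst (X t)) (snd (X t)) = stream u (fst (Y t')) (snd (Y t')).
Proof.
  intros Ht Ht'. rewrite (stream_conserved u a J X Hu Hdiv HJ HJ0 HX t Ht).
  rewrite (stream_conserved u a J Y Hu Hdiv HJ HJ0 HY t' Ht'). auto.
Qed.

Lemma solutions_in_box s rho : J s -> X s = Y s -> 0 < rho ->
  exists d, 0 < d /\ forall t, Rabs (t - s) < d ->
    J t /\ in_box (X s) rho (X t) /\ in_box (X s) rho (Y t).
Proof.
  intros Hs Es Hr. destruct HJ as [_ HJo]. destruct (HJo s Hs) as [r0 [Hr0 H0]].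
  destruct (solution_cont u a J X s HX Hs) as [CX1 CX2].
  destruct (solution_cont u a J Y s HY Hs) as [CY1 CY2].
  destruct (CX1 rho Hr) as [d1 [Hd1 E1]]. destruct (CX2 rho Hr) as [d2 [Hd2 E2]].
  destruct (CY1 rho Hr) as [d3 [Hd3 E3]]. destruct (CY2 rho Hr) as [d4 [Hd4 E4]].
  set (d := Rmin (Rmin r0 d1) (Rmin d2 (Rmin d3 d4))).
  pose proof (Rmin_l (Rmin r0 d1) (Rmin d2 (Rmin d3 d4))).
  pose proof (Rmin_r (Rmin r0 d1) (Rmin d2 (Rmin d3 d4))).
  pose proof (Rmin_l r0 d1); pose proof (Rmin_r r0 d1); pose proof (Rmin_l d2 (Rmin d3 d4)).
  pose proof (Rmin_r d2 (Rmin d3 d4)); pose proof (Rmin_l d3 d4); pose proof (Rmin_r d3 d4).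
  exists d. split; [unfold d; repeat apply Rmin_glb_lt; auto|].
  intros t Ht. unfold in_box. rewrite Es at 3 4. unfold d in Ht.
  repeat split; [apply H0 | apply E1 | apply E2 | apply E3 | apply E4]; lra.
Qed.

Lemma local_uniqueness_dir alpha beta s : J s -> X s = Y s ->
  0 < lin alpha beta (u (X s)) ->
  (forall rho m, 0 < m -> (forall q, in_box (X s) rho q -> m <= lin alpha beta (u q)) ->
     forall q q', in_box (X s) rho q -> in_box (X s) rho q' ->
     lin alpha beta q = lin alpha beta q' ->
     stream u (fst q) (snd q) = stream u (fst q') (snd q') -> q = q') ->
  exists d, 0 < d /\ forall t, Rabs (t - s) < d -> X t = Y t.
Proof.
  intros Hs Es Hc Hlevel.
  set (c := lin alpha beta (u (X s))) in *.
  destruct (lin_field_bounds u (X s) alpha beta Hu Hc) as [rho [Hr Hbound]].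
  destruct (solutions_in_box s rho Hs Es Hr) as [d [Hd Hin]].
  assert (Meet : forall t t', Rabs (t - s) < d -> Rabs (t' - s) < d ->
            lin alpha beta (X t) = lin alpha beta (Y t') -> X t = Y t').
  { intros t t' Ht Ht' E. destruct (Hin t Ht) as (Jt & Bt & _).
    destruct (Hin t' Ht') as (Jt' & _ & Bt').
    apply (Hlevel rho (c / 2)); auto; [lra | intros q Hq; apply Hbound; auto |].
    apply stream_X_Y; auto. }
  assert (Hderiv : forall Z, is_solution u a J Z -> forall t, J t ->
            derivable_pt_lim (fun t => lin alpha beta (Z t)) t (lin alpha beta (u (Z t)))).
  { intros Z [_ HZ] t Ht. destruct (HZ t Ht) as [D1 D2]. unfold lin.
    apply derivable_pt_lim_plus; apply derivable_pt_lim_scal; auto. }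
  assert (Hcont : forall Z, is_solution u a J Z -> forall t, J t ->
            cont_at (fun t => lin alpha beta (u (Z t))) t).
  { intros Z HZ t Ht. destruct (solution_cont u a J Z t HZ Ht) as [C1 C2].
    destruct (cont_at_field_along u Z t Hu C1 C2) as [F1 F2].
    unfold lin. apply cont_at_plus; apply cont_at_mult; auto; apply cont_at_const. }
  destruct (comparison (fun t => lin alpha beta (X t)) (fun t => lin alpha beta (Y t))
              (fun t => lin alpha beta (u (X t))) (fun t => lin alpha beta (u (Y t)))
              s d (c / 2) (3 * c / 2)) as [d' [Hd' Hcmp]]; auto; try lra.
  - intros t Ht. destruct (Hin t Ht) as (Jt & _). split; apply Hderiv; auto.
  - intros t Ht. destruct (Hin t Ht) as (_ & Bx & By). split; apply Hbound; auto.
  - intros t Ht. destruct (Hin t Ht) as (Jt & _). split; apply Hcont; auto.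
  - intros t t' Ht Ht' E. rewrite (Meet t t' Ht Ht' E). auto.
  - rewrite Es. auto.
  - exists (Rmin d d'). split; [apply Rmin_glb_lt; auto|]. intros t Ht.
    pose proof (Rmin_l d d'). pose proof (Rmin_r d d').
    apply Meet; try lra. apply Hcmp. lra.
Qed.

(** Two solutions that meet at a point where [u] does not vanish agree
    nearby: use a coordinate direction in which [u] is nonzero, where the
    level sets of [stream u] are graphs over that coordinate. *)
Lemma local_uniqueness s : J s -> X s = Y s -> u (X s) <> (0, 0) ->
  exists d, 0 < d /\ forall t, Rabs (t - s) < d -> X t = Y t.
Proof.
  intros Hs Es Hn.
  assert (Hsign : forall v : R, v <> 0 -> exists sigma, sigma <> 0 /\ 0 < sigma * v).
  { intros v Hv. destruct (Rlt_le_dec 0 v); [exists 1 | exists (-1)]; split; lra. }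
  destruct (Req_dec (fst (u (X s))) 0) as [Z1|NZ1].
  - assert (NZ2 : snd (u (X s)) <> 0).
    { intro Z2. apply Hn. rewrite (surjective_pairing (u (X s))), Z1, Z2. auto. }
    destruct (Hsign _ NZ2) as [sigma [Hsig Hpos]].
    apply (local_uniqueness_dir 0 sigma s); auto; [unfold lin; lra|].
    intros rho m Hm Hb q q' Hq Hq' E. unfold lin in E.
    apply (stream_level_snd u (X s) rho sigma m); auto.
    + intros r Hr. specialize (Hb r Hr). unfold lin in Hb. lra.
    + apply (Rmult_eq_reg_l sigma); auto. lra.
  - destruct (Hsign _ NZ1) as [sigma [Hsig Hpos]].
    apply (local_uniqueness_dir sigma 0 s); auto; [unfold lin; lra|].
    intros rho m Hm Hb q q' Hq Hq' E. unfold lin in E.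
    apply (stream_level_fst u (X s) rho sigma m); auto.
    + intros r Hr. specialize (Hb r Hr). unfold lin in Hb. lra.
    + apply (Rmult_eq_reg_l sigma); auto. lra.
Qed.
End Local.

(** ** From local to global: continuation along the interval *)

Lemma continuation_right (P J : R -> Prop) : open_int_set J -> J 0 -> P 0 ->
  (forall s, J s -> P s -> exists d, 0 < d /\ forall t, Rabs (t - s) < d -> P t) ->
  (forall s, J s -> (forall e, 0 < e -> exists q, Rabs (q - s) < e /\ P q) -> P s) ->
  forall t, J t -> 0 <= t -> P t.
Proof.
  intros [HJc _] HJ0 HP0 Hopen Hclosed t Ht Ht0.
  set (E := fun r => 0 <= r <= t /\ forall q, 0 <= q <= r -> P q).
  assert (HE0 : E 0) by (split; [lra | intros q Hq; replace q with 0 by lra; auto]).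
  assert (Hb : bound E) by (exists t; intros r [Hr _]; lra).
  destruct (completeness E Hb (ex_intro _ 0 HE0)) as [sg [Hub Hlub]].
  assert (Hs0 : 0 <= sg) by (apply Hub; auto).
  assert (Hst : sg <= t) by (apply Hlub; intros r [Hr _]; lra).
  assert (Js : J sg) by (apply (HJc 0 t); auto).
  assert (Hbelow : forall q, 0 <= q < sg -> P q).
  { intros q Hq. apply NNPP. intro Hn.
    assert (sg <= q); [|lra].
    apply Hlub. intros r [Hr1 Hr2]. destruct (Rle_dec r q); auto.
    exfalso. apply Hn, Hr2. lra. }
  assert (Ps : P sg).
  { apply Hclosed; auto. intros e He. destruct (Req_dec sg 0) as [Z|NZ].
    - exists 0. rewrite Z. split; auto. unfold Rminus; rewrite Rplus_opp_r, Rabs_R0; auto.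
    - exists (Rmax 0 (sg - e / 2)). split.
      + unfold Rmax; destruct Rle_dec; apply Rabs_lt_between'; lra.
      + apply Hbelow. unfold Rmax; destruct Rle_dec; lra. }
  destruct (Hopen sg Js Ps) as [d [Hd Hd']].
  destruct (Rle_lt_dec t sg) as [H|H]; [replace t with sg by lra; auto|exfalso].
  set (r := Rmin t (sg + d / 2)).
  pose proof (Rmin_l t (sg + d / 2)); pose proof (Rmin_r t (sg + d / 2)).
  assert (Er : E r).
  { split; [unfold r; split; [apply Rmin_glb|]; lra|].
    intros q Hq. destruct (Rlt_le_dec q sg); [apply Hbelow; lra|].
    apply Hd'. apply Rabs_lt_between'. unfold r in Hq. lra. }
  assert (r <= sg) by (apply Hub; auto).
  unfold r, Rmin in *. destruct Rle_dec; lra.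
Qed.

(** The same on all of [J], using time reversal for negative times. *)
Lemma continuation (P J : R -> Prop) : open_int_set J -> J 0 -> P 0 ->
  (forall s, J s -> P s -> exists d, 0 < d /\ forall t, Rabs (t - s) < d -> P t) ->
  (forall s, J s -> (forall e, 0 < e -> exists q, Rabs (q - s) < e /\ P q) -> P s) ->
  forall t, J t -> P t.
Proof.
  intros HJ HJ0 HP0 Hopen Hclosed t Ht.
  assert (Hneg : forall x y, Rabs (- x - - y) = Rabs (x - y)).
  { intros. replace (- x - - y) with (- (x - y)) by ring. apply Rabs_Ropp. }
  destruct (Rle_dec 0 t); [eapply continuation_right; eauto|].
  replace t with (- - t) by ring.
  apply (continuation_right (fun r => P (- r)) (fun r => J (- r))); try lra.
  - destruct HJ as [HJc HJo]. split.
    + intros a b c Ha Hb Hc. apply (HJc (-b) (-a)); auto; lra.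
    + intros x Hx. destruct (HJo (-x) Hx) as [r0 [Hr0 H0]]. exists r0. split; auto.
      intros y Hy. apply H0. rewrite Hneg; auto.
  - rewrite Ropp_0; auto.
  - rewrite Ropp_0; auto.
  - intros s Hs Ps. destruct (Hopen (-s) Hs Ps) as [d [Hd H]]. exists d. split; auto.
    intros t' Ht'. apply H. rewrite Hneg; auto.
  - intros s Hs Hq. apply Hclosed; auto. intros e He. destruct (Hq e He) as [q [Hq1 Hq2]].
    exists (- q). split; auto. rewrite Hneg; auto.
  - rewrite Ropp_involutive; auto.
Qed.

Lemma cont_at_eq_limit (f g : R -> R) s : cont_at f s -> cont_at g s ->
  (forall e, 0 < e -> exists q, Rabs (q - s) < e /\ f q = g q) -> f s = g s.
Proof.
  intros Cf Cg H. apply Req_le_aux. intros [eta Heta]; simpl.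
  destruct (Cf (eta / 2) ltac:(lra)) as [d1 [Hd1 E1]].
  destruct (Cg (eta / 2) ltac:(lra)) as [d2 [Hd2 E2]].
  destruct (H (Rmin d1 d2) ltac:(apply Rmin_glb_lt; auto)) as [q [Hq1 Hq2]].
  pose proof (Rmin_l d1 d2). pose proof (Rmin_r d1 d2).
  specialize (E1 q ltac:(lra)). specialize (E2 q ltac:(lra)).
  rewrite Hq2 in E1. apply Rabs_def2 in E1. apply Rabs_def2 in E2. apply Rabs_le. lra.
Qed.

Lemma solutions_agree_closed u a J X Y s : is_solution u a J X -> is_solution u a J Y -> J s ->
  (forall e, 0 < e -> exists q, Rabs (q - s) < e /\ X q = Y q) -> X s = Y s.
Proof.
  intros HX HY Hs Hq.
  destruct (solution_cont u a J X s HX Hs) as [C1 C2].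
  destruct (solution_cont u a J Y s HY Hs) as [C3 C4].
  rewrite (surjective_pairing (X s)), (surjective_pairing (Y s)).
  f_equal; [apply (cont_at_eq_limit (fun t => fst (X t)) (fun t => fst (Y t)))
           | apply (cont_at_eq_limit (fun t => snd (X t)) (fun t => snd (Y t)))]; auto;
    intros e He; destruct (Hq e He) as [q [H1 H2]]; exists q; rewrite H2; auto.
Qed.

Theorem theorem5p1 (u : pt -> pt) (D : pt -> Prop) :
  cont2 u -> div_free u -> domain2 D ->
  (forall p, D p -> u p <> (0, 0)) ->
  forall (a : pt), D a ->
  forall (J : R -> Prop), open_int_set J -> J 0 ->
  forall X Y : R -> pt,
    is_solution u a J X -> is_solution u a J Y ->
    (forall t, J t -> D (X t)) ->
    forall t, J t -> X t = Y t.
Proof.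
  intros Hu Hdiv _ Hu0 a _ J HJ HJ0 X Y HX HY HXD.
  apply (continuation (fun t => X t = Y t) J); auto.
  - destruct HX as [-> _]. destruct HY as [-> _]. auto.
  - intros s Hs Es. apply (local_uniqueness u Hu Hdiv a J HJ HJ0 X Y HX HY s Hs Es).
    apply Hu0, HXD; auto.
  - intros s Hs Hq. apply (solutions_agree_closed u a J X Y s HX HY Hs Hq).
Qed.
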